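(* Let $\mathcal{H}$ be a finite-dimensional Hilbert space, $\{\rho_\theta;\theta\in\Theta\subset\mathbb{R}^d\}$ a smooth family of density operators, and $\theta_0\in\Theta$ with $\rho=\rho_{\theta_0}$ strictly positive. The following conditions are equivalent: (i) $\operatorname{span}_{\mathbb{R}}\{\partial_i\rho\}_{i=1}^d$ is $\mathcal{D}_\rho$ invariant; (ii) $\operatorname{span}_{\mathbb{R}}\{L_i^{(S)}\}_{i=1}^d$ is $\mathcal{D}_\rho$ invariant; (ii)' $\operatorname{span}_{\mathbb{C}}\{L_i^{(S)}\}_{i=1}^d$ is $\mathcal{D}_\rho$ invariant; (iii) $\operatorname{span}_{\mathbb{C}}\{L_i^{(S)}\}_{i=1}^d=\operatorname{span}_{\mathbb{C}}\{L_i^{(\beta)}\}_{i=1}^d$ for every $\beta\in[0,1]$; (iv) $(J^{(\beta)}_{\theta_0})^{-1}=(J^{(S)}_{\theta_0})^{-1}(\operatorname{Re}Z+\beta\sqrt{-1}\operatorname{Im}Z)(J^{(S)}_{\theta_0})^{-1}$ for every $\beta\in[0,1]$, where $Z=[\operatorname{Tr}L_i^{(S)}\rho L_j^{(S)}]_{ij}$.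
   Context: $\partial_i\rho=\frac{\partial}{\partial\theta^i}\rho_\theta|_{\theta=\theta_0}$. The commutation operator $\mathcal{D}_\rho$ on $\mathcal{B}(\mathcal{H})$ is defined by $\mathcal{D}_\rho(X)\rho+\rho\mathcal{D}_\rho(X)=\sqrt{-1}(X\rho-\rho X)$; a subspace $W$ is $\mathcal{D}_\rho$ invariant if $\mathcal{D}_\rho(W)\subset W$. For $\beta\in[0,1]$, $L_i^{(\beta)}$ is defined by $\partial_i\rho=\frac{1+\beta}{2}\rho L_i^{(\beta)}+\frac{1-\beta}{2}L_i^{(\beta)}\rho$, with $L_i^{(S)}=L_i^{(0)}$ the SLDs (assumed linearly independent). With $\langle X,Y\rangle^{(\beta)}=\frac12\operatorname{Tr}X^*\{(1+\beta)\rho Y+(1-\beta)Y\rho\}$, $J^{(\beta)}_{\theta_0}=[\langle L_i^{(\beta)},L_j^{(\beta)}\rangle^{(\beta)}]_{ij}$ and $J^{(S)}_{\theta_0}=J^{(0)}_{\theta_0}$. Re, Im entrywise. *)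

(* operators on a finite-dimensional complex Hilbert space
   C^n are n x n matrices over C := R[i] (complex numbers over the real
   numbers R : realType, from mathcomp-real-closed's complex.v). *)
From HB Require Import structures.
From mathcomp Require Import all_boot all_order all_algebra.
From mathcomp Require Import complex.
From mathcomp Require Import reals.

Set Implicit Arguments.
Unset Strict Implicit.
Unset Printing Implicit Defensive.

Import Order.TTheory GRing.Theory Num.Theory.
Local Open Scope ring_scope.

Section QDefs.
Variable R : rcfType.
Local Notation C := R[i].

Definition iC : C := 'i.

Definition cR (x : R) : C := (x%:C)%C.

Definition adjmx (m n : nat) (A : 'M[C]_(m, n)) : 'M[C]_(n, m) :=
  (map_mx Num.conj A)^T.

Definition herm_op (n : nat) (A : 'M[C]_n) : Prop := adjmx A = A.

Definition psd (n : nat) (A : 'M[C]_n) : Prop :=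
  herm_op A /\ forall v : 'cV[C]_n, 0 <= (adjmx v *m A *m v) 0 0.

Definition strictly_positive (n : nat) (A : 'M[C]_n) : Prop :=
  herm_op A /\ forall v : 'cV[C]_n, v != 0 -> 0 < (adjmx v *m A *m v) 0 0.

Definition density (n : nat) (rho : 'M[C]_n) : Prop := psd rho /\ \tr rho = 1.

Definition Rspan (n d : nat) (A : 'I_d -> 'M[C]_n) (X : 'M[C]_n) : Prop :=
  exists c : 'I_d -> R, X = \sum_(i < d) cR (c i) *: A i.

Definition Cspan (n d : nat) (A : 'I_d -> 'M[C]_n) (X : 'M[C]_n) : Prop :=
  exists c : 'I_d -> C, X = \sum_(i < d) c i *: A i.

Definition R_lin_indep (n d : nat) (A : 'I_d -> 'M[C]_n) : Prop :=
  forall c : 'I_d -> R, \sum_(i < d) cR (c i) *: A i = 0 -> forall i, c i = 0.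

(* Y = D_rho(X)  iff  Y rho + rho Y = sqrt(-1) (X rho - rho X)
   (for strictly positive rho this determines Y uniquely) *)
Definition commutation_op_rel (n : nat) (rho X Y : 'M[C]_n) : Prop :=
  Y *m rho + rho *m Y = iC *: (X *m rho - rho *m X).

Definition D_invariant (n : nat) (rho : 'M[C]_n) (W : 'M[C]_n -> Prop) : Prop :=
  forall X Y, W X -> commutation_op_rel rho X Y -> W Y.

Definition beta_LD_eq (n : nat) (beta : R) (rho drho L : 'M[C]_n) : Prop :=
  drho = cR ((1 + beta) / 2) *: (rho *m L) + cR ((1 - beta) / 2) *: (L *m rho).

Definition ip_beta (n : nat) (beta : R) (rho X Y : 'M[C]_n) : C :=
  2^-1 * \tr (adjmx X *m (cR (1 + beta) *: (rho *m Y) + cR (1 - beta) *: (Y *m rho))).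

Definition Jbeta (n d : nat) (beta : R) (rho : 'M[C]_n) (L : 'I_d -> 'M[C]_n)
  : 'M[C]_d := \matrix_(i < d, j < d) ip_beta beta rho (L i) (L j).

Definition Zmat (n d : nat) (rho : 'M[C]_n) (L : 'I_d -> 'M[C]_n) : 'M[C]_d :=
  \matrix_(i < d, j < d) \tr (L i *m rho *m L j).

Definition Re_mx (d : nat) (M : 'M[C]_d) : 'M[C]_d := map_mx (fun z => 'Re z) M.
Definition Im_mx (d : nat) (M : 'M[C]_d) : 'M[C]_d := map_mx (fun z => 'Im z) M.

End QDefs.
Arguments iC {R}.

(* Write S_b X = (1+b)/2 rho X + (1-b)/2 X rho ([beta_mul rho b]), so that
   d_i rho = S_b (L_i^(b)).  For positive definite rho and b in [0,1], S_b is injective,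
   because tr (X^* S_b X) is a positive combination of tr (X^* rho X) and tr (X rho X^* ),
   and S_b = S_0 (1 + i b D) with D = D_rho ([comm_op rho]).  Since S_0 commutes with D,
   (i) <-> (ii); since the SLDs are Hermitian and D preserves Hermiticity,
   (ii) <-> (ii)'.  If D L_j = sum_k A_kj L_k, then S_b acts on span L^(S) through the
   matrix M_b = 1 + i b A, whence L^(b) = L^(S) M_b^-1, which is (iii), and
   J^(b) = M_b^-* J^(S) with J^(S) M_b = Re Z + i b Im Z Hermitian, which is (iv).
   Conversely, (iii) and (iv) at b = 1 both say span L^(1) = span L^(S): for (iv),
   Z = J^(S) (J^(1))^-1 J^(S) is the equality case of Bessel's inequality for the inner
   product tr (X^* rho Y).  As D L^(1) = -i (L^(S) - L^(1)), that common span is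
   D-invariant. *)

From HB Require Import structures.
From mathcomp Require Import all_boot all_order all_algebra.
From mathcomp Require Import complex.
From mathcomp Require Import reals.
From mathcomp Require Import ring.
Import Order.TTheory GRing.Theory Num.Theory.
Local Open Scope ring_scope.
Set Implicit Arguments.
Unset Strict Implicit.
Unset Printing Implicit Defensive.

Section LinearInverse.
Variables (F : fieldType) (m n : nat) (f : {linear 'M[F]_(m, n) -> 'M[F]_(m, n)}).

Definition lininv_mx (Y : 'M[F]_(m, n)) : 'M[F]_(m, n) :=
  vec_mx (mxvec Y *m invmx (lin_mx f)).

Fact lininv_mx_is_linear : linear lininv_mx.
Proof. by move=> a Y Z; rewrite /lininv_mx linearP mulmxDl -scalemxAl linearP. Qed.

HB.instance Definition _ := GRing.isLinear.Build F _ _ _ lininv_mx lininv_mx_is_linear.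

Lemma lininv_mxK : injective f -> cancel lininv_mx f.
Proof.
move=> f_inj Y.
have f_unit : lin_mx f \in unitmx.
  rewrite -row_free_unit; apply: inj_row_free => v.
  rewrite -[v]vec_mxK mul_vec_lin => /(congr1 vec_mx); rewrite mxvecK linear0 -(linear0 f).
  by move/f_inj ->; rewrite linear0.
by rewrite -[f _]mxvecK -mul_vec_lin vec_mxK mulmxKV // mxvecK.
Qed.

End LinearInverse.

Lemma unitmx_of_ker (F : fieldType) d (M : 'M[F]_d) :
  (forall x : 'cV_d, M *m x = 0 -> x = 0) -> M \in unitmx.
Proof.
move=> M_inj; rewrite -unitmx_tr -row_free_unit; apply: inj_row_free => v vM0.
apply: trmx_inj; rewrite trmx0; apply: M_inj.
by rewrite -[M]trmxK -trmx_mul vM0 trmx0.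
Qed.

Section Adjoint.
Variable R : rcfType.
Local Notation C := R[i].

Lemma cR_conj (x : R) : (cR x)^* = cR x.
Proof. exact: conjc_real. Qed.

Lemma conj_iC : (iC : C)^* = - iC.
Proof. exact: conjCi. Qed.

Fact adjmx_is_nmod_morphism m n : nmod_morphism (@adjmx R m n).
Proof. by rewrite /adjmx; split=> [|A B]; rewrite ?raddf0 ?linear0 // raddfD linearD. Qed.

HB.instance Definition _ m n := GRing.isNmodMorphism.Build 'M[C]_(m, n) 'M[C]_(n, m)
  (@adjmx R m n) (adjmx_is_nmod_morphism m n).

Lemma adjmxK m n (A : 'M[C]_(m, n)) : adjmx (adjmx A) = A.
Proof. by apply/matrixP=> i j; rewrite !mxE conjCK. Qed.

Lemma adjmxM m n p (A : 'M[C]_(m, n)) (B : 'M[C]_(n, p)) :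
  adjmx (A *m B) = adjmx B *m adjmx A.
Proof. by rewrite /adjmx map_mxM trmx_mul. Qed.

Lemma adjmxZ m n (c : C) (A : 'M[C]_(m, n)) : adjmx (c *: A) = c^* *: adjmx A.
Proof. by apply/matrixP=> i j; rewrite !mxE rmorphM. Qed.

Lemma adjmx1 m : adjmx (1%:M : 'M[C]_m) = 1%:M.
Proof. by rewrite /adjmx map_mx1 trmx1. Qed.

Lemma mxtrace_adj m (A : 'M[C]_m) : \tr (adjmx A) = (\tr A)^*.
Proof. by rewrite /adjmx mxtrace_tr /mxtrace rmorph_sum; apply: eq_bigr => i _; rewrite mxE. Qed.

Lemma invmx_adjmx_inv_mul m (J M : 'M[C]_m) : J \in unitmx -> M \in unitmx ->
  J *m M = adjmx M *m J -> invmx (adjmx (invmx M) *m J) = invmx J *m (J *m M) *m invmx J.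
Proof.
move=> J_unit M_unit JM; rewrite mulKmx //.
have inv_r : adjmx (invmx M) *m J *m (M *m invmx J) = 1%:M.
  rewrite -mulmxA (mulmxA J) JM !mulmxA -adjmxM mulmxV // adjmx1 mul1mx mulmxV //.
have [AJ_unit _] := mulmx1_unit inv_r.
by rewrite -[LHS]mulmx1 -inv_r mulKmx.
Qed.

End Adjoint.

Section PositiveDefinite.
Variable R : rcfType.
Local Notation C := R[i].
Variables (n : nat) (rho : 'M[C]_n).
Hypothesis rho_pos : forall v : 'cV[C]_n, v != 0 -> 0 < (adjmx v *m rho *m v) 0 0.

Lemma quad_form_ge0 (v : 'cV[C]_n) : 0 <= (adjmx v *m rho *m v) 0 0.
Proof.
have [->|v_neq0] := eqVneq v 0; last exact: ltW (rho_pos v_neq0).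
by rewrite mulmx0 mxE.
Qed.

Lemma quad_form_diag (X : 'M[C]_n) k :
  (adjmx X *m rho *m X) k k = (adjmx (col k X) *m rho *m col k X) 0 0.
Proof.
rewrite !mxE; apply: eq_bigr => l _; rewrite !mxE; congr (_ * _).
by apply: eq_bigr => m _; rewrite !mxE.
Qed.

Lemma trace_form_ge0 (X : 'M[C]_n) : 0 <= \tr (adjmx X *m rho *m X).
Proof. by apply: sumr_ge0 => k _; rewrite quad_form_diag quad_form_ge0. Qed.

Lemma trace_form_eq0 (X : 'M[C]_n) : \tr (adjmx X *m rho *m X) = 0 -> X = 0.
Proof.
move/eqP; rewrite psumr_eq0 => [/allP X_eq0|k _]; last first.
  by rewrite quad_form_diag quad_form_ge0.
apply/matrixP => i k; rewrite mxE.
have /eqP := X_eq0 k (mem_index_enum _); rewrite quad_form_diag => colX_eq0.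
have /matrixP/(_ i 0) : col k X = 0.
  by apply: contra_eq colX_eq0 => /rho_pos /gt_eqF /negbT.
by rewrite !mxE.
Qed.

Lemma trace_posdef_comb_eq0 (a b : R) (X : 'M[C]_n) : 0 < a -> 0 <= b ->
  \tr (adjmx X *m (cR a *: (rho *m X) + cR b *: (X *m rho))) = 0 -> X = 0.
Proof.
move=> a_gt0 b_ge0; rewrite mulmxDr -!scalemxAr mxtraceD !mxtraceZ !mulmxA.
have Xrho_ge0 : 0 <= \tr (adjmx X *m X *m rho).
  by rewrite -mulmxA mxtrace_mulC -[X in X *m _ *m _]adjmxK trace_form_ge0.
have a_neq0 : cR a != 0 by rewrite fmorph_eq0 lt0r_neq0.
have [a_ge0 b_ge0'] : 0 <= cR a /\ 0 <= cR b by rewrite !lecR ltW.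
move/eqP; rewrite paddr_eq0 ?mulr_ge0 ?trace_form_ge0 //.
by rewrite mulf_eq0 (negPf a_neq0) => /andP[/eqP/trace_form_eq0].
Qed.

End PositiveDefinite.

Section BetaMultiplication.
Variable R : rcfType.
Local Notation C := R[i].
Variables (n : nat) (rho : 'M[C]_n).

Definition beta_mul (b : R) (X : 'M[C]_n) : 'M[C]_n :=
  cR ((1 + b) / 2) *: (rho *m X) + cR ((1 - b) / 2) *: (X *m rho).

Fact beta_mul_is_linear b : linear (beta_mul b).
Proof.
move=> a X Y; rewrite /beta_mul mulmxDr mulmxDl -scalemxAr -scalemxAl.
by rewrite !scalerDr !scalerA ![_ * a]mulrC addrACA.
Qed.

HB.instance Definition _ b :=
  GRing.isLinear.Build C _ _ _ (beta_mul b) (beta_mul_is_linear b).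

Lemma beta_mul0E X : beta_mul 0 X = 2^-1 *: (X *m rho + rho *m X).
Proof. by rewrite /beta_mul addr0 subr0 mul1r /cR fmorphV rmorph_nat -scalerDr addrC. Qed.

Lemma beta_mul1E X : beta_mul 1 X = rho *m X.
Proof.
rewrite /beta_mul subrr mul0r -mulr2n divff ?pnatr_eq0 //.
by rewrite /cR rmorph0 rmorph1 scale0r addr0 scale1r.
Qed.

Lemma ip_betaE b X Y : ip_beta b rho X Y = \tr (adjmx X *m beta_mul b Y).
Proof.
rewrite /ip_beta /beta_mul -mxtraceZ scalemxAr scalerDr !scalerA.
by rewrite /cR !rmorphM fmorphV rmorph_nat ![_^-1 * _]mulrC.
Qed.

Lemma beta_mul_rhoM b X : beta_mul b (rho *m X) = rho *m beta_mul b X.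
Proof. by rewrite /beta_mul mulmxDr -!scalemxAr !mulmxA. Qed.

Lemma beta_mul_mulrho b X : beta_mul b (X *m rho) = beta_mul b X *m rho.
Proof. by rewrite /beta_mul mulmxDl -!scalemxAl !mulmxA. Qed.

Hypothesis rho_herm : adjmx rho = rho.

Lemma adjmx_beta_mul0 X : adjmx (beta_mul 0 X) = beta_mul 0 (adjmx X).
Proof. by rewrite !beta_mul0E adjmxZ raddfD /= !adjmxM rho_herm fmorphV rmorph_nat addrC. Qed.

Hypothesis rho_pos : forall v : 'cV[C]_n, v != 0 -> 0 < (adjmx v *m rho *m v) 0 0.

Lemma trace_beta_mul_eq0 b X : 0 <= b <= 1 ->
  \tr (adjmx X *m beta_mul b X) = 0 -> X = 0.
Proof.
case/andP=> b_ge0 b_le1; apply: trace_posdef_comb_eq0 => //.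
  by rewrite divr_gt0 ?ltr_wpDr.
by rewrite divr_ge0 ?subr_ge0.
Qed.

Lemma beta_mul_inj b : 0 <= b <= 1 -> injective (beta_mul b).
Proof.
move=> b01 X Y /eqP; rewrite -subr_eq0 -linearB => /eqP SXY.
by apply/eqP; rewrite -subr_eq0; apply/eqP/(trace_beta_mul_eq0 b01); rewrite SXY mulmx0 mxtrace0.
Qed.

Lemma beta_mul0_inj : injective (beta_mul 0).
Proof. by apply: beta_mul_inj; rewrite lexx ler01. Qed.

End BetaMultiplication.

Section CommutationOperator.
Variable R : rcfType.
Local Notation C := R[i].
Variables (n : nat) (rho : 'M[C]_n).

(* [lininv_mx f] inverts [f] only when [f] is injective; for positive definite [rho],
   [comm_op X] is the unique [Y] with [Y rho + rho Y = i (X rho - rho X)]. *)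
Definition comm_op (X : 'M[C]_n) : 'M[C]_n :=
  @lininv_mx C n n (beta_mul rho 0) ((iC / 2) *: (X *m rho - rho *m X)).

Fact comm_op_is_linear : linear comm_op.
Proof.
move=> a X Y; rewrite /comm_op -linearP; congr lininv_mx.
by rewrite mulmxDl mulmxDr -scalemxAl -scalemxAr opprD addrACA -scalerBr scalerDr !scalerA mulrC.
Qed.

HB.instance Definition _ := GRing.isLinear.Build C _ _ _ comm_op comm_op_is_linear.

Hypothesis rho_pos : forall v : 'cV[C]_n, v != 0 -> 0 < (adjmx v *m rho *m v) 0 0.

Lemma beta_mul0_comm_op X : beta_mul rho 0 (comm_op X) = (iC / 2) *: (X *m rho - rho *m X).
Proof. exact: lininv_mxK (beta_mul0_inj rho_pos) _. Qed.

Lemma commutation_op_relP X Y : commutation_op_rel rho X Y <-> Y = comm_op X.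
Proof.
rewrite /commutation_op_rel; split=> [relXY | ->].
  by apply: (beta_mul0_inj rho_pos); rewrite beta_mul0_comm_op beta_mul0E relXY scalerA mulrC.
apply: (scalerI (a := 2^-1)); first by rewrite invr_eq0 pnatr_eq0.
by rewrite -beta_mul0E beta_mul0_comm_op scalerA mulrC.
Qed.

Lemma D_invariantE (W : 'M[C]_n -> Prop) :
  D_invariant rho W <-> forall X, W X -> W (comm_op X).
Proof.
split=> [Winv X WX | Winv X Y WX /commutation_op_relP ->]; last exact: Winv.
by apply: Winv WX _; apply/commutation_op_relP.
Qed.

Lemma comm_op_commute (T : {linear 'M[C]_n -> 'M[C]_n}) :
    (forall X, T (rho *m X) = rho *m T X) -> (forall X, T (X *m rho) = T X *m rho) ->
  forall X, comm_op (T X) = T (comm_op X).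
Proof.
move=> TrhoM TMrho X.
have T_beta_mul0 Y : T (beta_mul rho 0 Y) = beta_mul rho 0 (T Y).
  by rewrite !beta_mul0E linearZ linearD /= TrhoM TMrho.
apply: (beta_mul0_inj rho_pos); rewrite -T_beta_mul0 (congr1 T (beta_mul0_comm_op X)).
by rewrite beta_mul0_comm_op [RHS]linearZ /= [T (_ - _)]linearB /= TrhoM TMrho.
Qed.

Lemma comm_op_beta_mul b X : comm_op (beta_mul rho b X) = beta_mul rho b (comm_op X).
Proof. exact: comm_op_commute (beta_mul_rhoM rho b) (beta_mul_mulrho rho b) X. Qed.

Lemma beta_mul_comm_op b X :
  beta_mul rho b X = beta_mul rho 0 (X + (iC * cR b) *: comm_op X).
Proof.
rewrite linearD linearZ /= beta_mul0_comm_op scalerA.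
have -> : iC * cR b * (iC / 2) = cR (- (b / 2)).
  by rewrite mulrACA -expr2 sqrCi mulN1r /cR rmorphN rmorphM fmorphV rmorph_nat.
rewrite /beta_mul scalerBr (addrC (_ *: (X *m rho))) addrACA -scalerBl -scalerDl.
by congr (_ *: _ + _ *: _); rewrite /cR -?rmorphB -?rmorphD; congr (_%:C)%C; ring.
Qed.

Hypothesis rho_herm : adjmx rho = rho.

Lemma adjmx_comm_op X : adjmx (comm_op X) = comm_op (adjmx X).
Proof.
apply: (beta_mul0_inj rho_pos); rewrite -adjmx_beta_mul0 //.
rewrite (congr1 (@adjmx R n n) (beta_mul0_comm_op X)) beta_mul0_comm_op adjmxZ raddfB /=.
by rewrite !adjmxM rho_herm fmorph_div /= conj_iC rmorph_nat mulNr scaleNr -scalerN opprB.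
Qed.

End CommutationOperator.

Section Families.
Variable R : rcfType.
Local Notation C := R[i].
Variables n d : nat.
Implicit Types (f g : 'I_d -> 'M[C]_n) (X Y : 'M[C]_n).

Definition fam_mulmx m f (M : 'M[C]_(d, m)) : 'I_m -> 'M[C]_n :=
  fun k => \sum_j M j k *: f j.

Definition C_lin_indep f : Prop :=
  forall c : 'I_d -> C, \sum_i c i *: f i = 0 -> forall i, c i = 0.

Lemma fam_mulmxA f (P : 'M[C]_d) m (Q : 'M[C]_(d, m)) k :
  fam_mulmx (fam_mulmx f P) Q k = fam_mulmx f (P *m Q) k.
Proof.
rewrite /fam_mulmx; under eq_bigr => i _ do rewrite scaler_sumr.
rewrite exchange_big /=; apply: eq_bigr => j _.
by rewrite mxE scaler_suml; apply: eq_bigr => i _; rewrite scalerA mulrC.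
Qed.

Lemma fam_mulmx1 f k : fam_mulmx f 1%:M k = f k.
Proof.
rewrite /fam_mulmx (bigD1 k) //= mxE eqxx scale1r big1 ?addr0 // => j /negbTE jk.
by rewrite mxE jk scale0r.
Qed.

Lemma fam_mulmx0 f m k : fam_mulmx f (0 : 'M[C]_(d, m)) k = 0.
Proof. by rewrite /fam_mulmx big1 // => j _; rewrite mxE scale0r. Qed.

Lemma fam_mulmxD f m (P Q : 'M[C]_(d, m)) k :
  fam_mulmx f (P + Q) k = fam_mulmx f P k + fam_mulmx f Q k.
Proof. by rewrite /fam_mulmx -big_split; apply: eq_bigr => j _; rewrite mxE scalerDl. Qed.

Lemma fam_mulmxZ f a m (P : 'M[C]_(d, m)) k :
  fam_mulmx f (a *: P) k = a *: fam_mulmx f P k.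
Proof. by rewrite /fam_mulmx scaler_sumr; apply: eq_bigr => j _; rewrite mxE scalerA. Qed.

Lemma linear_fam_mulmx (T : {linear 'M[C]_n -> 'M[C]_n}) f m (M : 'M[C]_(d, m)) k :
  T (fam_mulmx f M k) = fam_mulmx (fun j => T (f j)) M k.
Proof. by rewrite linear_sum; apply: eq_bigr => j _; rewrite linearZ. Qed.

Lemma eq_fam_mulmx f g m (M : 'M[C]_(d, m)) k :
  f =1 g -> fam_mulmx f M k = fam_mulmx g M k.
Proof. by move=> fg; apply: eq_bigr => j _; rewrite fg. Qed.

Lemma lin_indep_fam_mulmx_eq0 f (x : 'cV[C]_d) :
  C_lin_indep f -> fam_mulmx f x 0 = 0 -> x = 0.
Proof. by move=> f_indep /f_indep x0; apply/matrixP => i j; rewrite ord1 x0 mxE. Qed.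

Lemma Cspan_sum f (I : finType) (c : I -> C) (X : I -> 'M[C]_n) :
  (forall i, Cspan f (X i)) -> Cspan f (\sum_i c i *: X i).
Proof.
move=> spanX; have [e Xe] := fin_all_exists spanX.
exists (fun j => \sum_i c i * e i j).
under eq_bigr => i _ do rewrite Xe scaler_sumr.
rewrite exchange_big /=; apply: eq_bigr => j _.
by rewrite scaler_suml; apply: eq_bigr => i _; rewrite scalerA.
Qed.

Lemma Rspan_sum f (I : finType) (c : I -> R) (X : I -> 'M[C]_n) :
  (forall i, Rspan f (X i)) -> Rspan f (\sum_i cR (c i) *: X i).
Proof.
move=> spanX; have [e Xe] := fin_all_exists spanX.
exists (fun j => \sum_i c i * e i j).
under eq_bigr => i _ do rewrite Xe scaler_sumr.
rewrite exchange_big /=; apply: eq_bigr => j _.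
rewrite /cR rmorph_sum scaler_suml; apply: eq_bigr => i _.
by rewrite scalerA rmorphM.
Qed.

Lemma Rspan_mem f k : Rspan f (f k).
Proof.
exists (fun j => (j == k)%:R); rewrite -[LHS](fam_mulmx1 f k); apply: eq_bigr => j _.
by rewrite /cR rmorph_nat mxE.
Qed.

Lemma Rspan_Cspan f X : Rspan f X -> Cspan f X.
Proof. by case=> c ->; exists (fun j => cR (c j)). Qed.

Lemma Cspan_mem f k : Cspan f (f k).
Proof. exact/Rspan_Cspan/Rspan_mem. Qed.

Lemma CspanB f X Y : Cspan f X -> Cspan f Y -> Cspan f (X - Y).
Proof.
case=> a -> [b ->]; exists (fun j => a j - b j).
by rewrite -sumrB; apply: eq_bigr => j _; rewrite scalerBl.
Qed.

Lemma CspanZ f a X : Cspan f X -> Cspan f (a *: X).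
Proof.
case=> c ->; exists (fun j => a * c j).
by rewrite scaler_sumr; apply: eq_bigr => j _; rewrite scalerA.
Qed.

Lemma Cspan_fam_mulmx f m (M : 'M[C]_(d, m)) k : Cspan f (fam_mulmx f M k).
Proof. by exists (fun j => M j k). Qed.

Lemma Cspan_trans f g X : (forall k, Cspan g (f k)) -> Cspan f X -> Cspan g X.
Proof. by move=> fg [c ->]; apply: Cspan_sum. Qed.

Lemma Cspan_fam_mulmx_unit f g (M : 'M[C]_d) : M \in unitmx ->
  (forall k, g k = fam_mulmx f M k) -> forall X, Cspan f X <-> Cspan g X.
Proof.
move=> M_unit gE X; split; apply: Cspan_trans => k; last by rewrite gE; apply: Cspan_fam_mulmx.
rewrite -(fam_mulmx1 f k) -(mulmxV M_unit) -fam_mulmxA (eq_fam_mulmx _ _ (fun j => esym (gE j))).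
exact: Cspan_fam_mulmx.
Qed.

Lemma Rspan_linear_inj f g (T : {linear 'M[C]_n -> 'M[C]_n}) : injective T ->
  (forall k, g k = T (f k)) -> forall Y, Rspan g (T Y) <-> Rspan f Y.
Proof.
move=> T_inj gE Y; split=> [[c cE] | [c ->]]; exists c.
  by apply: T_inj; rewrite cE linear_sum; apply: eq_bigr => j _; rewrite linearZ gE.
by rewrite linear_sum; apply: eq_bigr => j _; rewrite linearZ gE.
Qed.

Lemma Cspan_stable f (T : {linear 'M[C]_n -> 'M[C]_n}) :
  (forall k, Cspan f (T (f k))) -> forall X, Cspan f X -> Cspan f (T X).
Proof.
by move=> Tf X [c ->]; rewrite linear_sum; under eq_bigr do rewrite linearZ; apply: Cspan_sum.
Qed.

Lemma Rspan_stable f (T : {linear 'M[C]_n -> 'M[C]_n}) :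
  (forall k, Rspan f (T (f k))) -> forall X, Rspan f X -> Rspan f (T X).
Proof.
by move=> Tf X [c ->]; rewrite linear_sum; under eq_bigr do rewrite linearZ; apply: Rspan_sum.
Qed.

Lemma sum_scale_ReIm f (c : 'I_d -> C) : \sum_j c j *: f j =
  \sum_j cR (complex.Re (c j)) *: f j + iC *: \sum_j cR (complex.Im (c j)) *: f j.
Proof.
rewrite scaler_sumr -big_split; apply: eq_bigr => j _.
by rewrite /= scalerA -scalerDl {1}[c j]complexE.
Qed.

Lemma herm_ReIm_eq0 (P Q : 'M[C]_n) : adjmx P = P -> adjmx Q = Q ->
  P + iC *: Q = 0 -> P = 0 /\ Q = 0.
Proof.
move=> P_herm Q_herm PQ0.
have PQ0' : P - iC *: Q = 0.
  by rewrite -scaleNr -conj_iC -P_herm -Q_herm -adjmxZ -raddfD PQ0 raddf0.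
have P0 : P = 0.
  have : (P + iC *: Q) + (P - iC *: Q) = 0 by rewrite PQ0 PQ0' addr0.
  rewrite addrACA subrr addr0 -mulr2n -scaler_nat => /eqP.
  by rewrite scaler_eq0 pnatr_eq0 => /eqP.
split=> //; apply: (scalerI (neq0Ci C)).
by rewrite scaler0 -PQ0 P0 add0r.
Qed.

Section HermitianFamily.
Variable f : 'I_d -> 'M[C]_n.
Hypothesis f_herm : forall k, adjmx (f k) = f k.

Lemma Rspan_herm X : Rspan f X -> adjmx X = X.
Proof.
case=> c ->; rewrite raddf_sum; apply: eq_bigr => i _ /=.
by rewrite adjmxZ cR_conj f_herm.
Qed.

Lemma Cspan_herm_Rspan X : adjmx X = X -> Cspan f X -> Rspan f X.
Proof.
move=> X_herm [c]; rewrite sum_scale_ReIm => XE.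
have /herm_ReIm_eq0[] : (\sum_j cR (complex.Re (c j)) *: f j - X) +
    iC *: \sum_j cR (complex.Im (c j)) *: f j = 0.
  by rewrite addrAC XE subrr.
- by rewrite raddfB /= X_herm Rspan_herm //; eexists.
- by apply: Rspan_herm; eexists.
by move=> /eqP; rewrite subr_eq0 => /eqP <- _; eexists.
Qed.

Lemma C_lin_indep_herm : R_lin_indep f -> C_lin_indep f.
Proof.
move=> f_indep c; rewrite sum_scale_ReIm => /herm_ReIm_eq0[]; try by apply: Rspan_herm; eexists.
by move=> /f_indep Re0 /f_indep Im0 i; rewrite [c i]complexE Re0 Im0 /cR rmorph0 mulr0 addr0.
Qed.

End HermitianFamily.

End Families.

Section Gram.
Variable R : rcfType.
Local Notation C := R[i].
Variable n : nat.

Definition tr_gram d m (f : 'I_d -> 'M[C]_n) (g : 'I_m -> 'M[C]_n) : 'M[C]_(d, m) :=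
  \matrix_(i, j) \tr (adjmx (f i) *m g j).

Definition rho_gram (rho : 'M[C]_n) d m (f : 'I_d -> 'M[C]_n) (g : 'I_m -> 'M[C]_n) :=
  tr_gram f (fun j => rho *m g j).

Variables d m : nat.
Implicit Types (f : 'I_d -> 'M[C]_n) (g h : 'I_m -> 'M[C]_n).

Lemma eq_tr_gram f f' g g' : f =1 f' -> g =1 g' -> tr_gram f g = tr_gram f' g'.
Proof. by move=> ff' gg'; apply/matrixP => i j; rewrite !mxE ff' gg'. Qed.

Lemma tr_gram_mulmxl p f (M : 'M[C]_(d, p)) g :
  tr_gram (fam_mulmx f M) g = adjmx M *m tr_gram f g.
Proof.
apply/matrixP => i j; rewrite !mxE /fam_mulmx raddf_sum /= mulmx_suml linear_sum.
by apply: eq_bigr => k _; rewrite /= adjmxZ -scalemxAl linearZ !mxE.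
Qed.

Lemma tr_gram_mulmxr p f g (M : 'M[C]_(m, p)) :
  tr_gram f (fam_mulmx g M) = tr_gram f g *m M.
Proof.
apply/matrixP => i j; rewrite !mxE /fam_mulmx mulmx_sumr linear_sum.
by apply: eq_bigr => k _; rewrite /= -scalemxAr linearZ mxE mulrC.
Qed.

Lemma tr_gramBl f f' g :
  tr_gram (fun i => f i - f' i) g = tr_gram f g - tr_gram f' g.
Proof. by apply/matrixP => i j; rewrite !mxE raddfB mulmxBl linearB. Qed.

Lemma tr_gramBr f g h :
  tr_gram f (fun j => g j - h j) = tr_gram f g - tr_gram f h.
Proof. by apply/matrixP => i j; rewrite !mxE mulmxBr linearB. Qed.

Lemma Jbeta_tr_gram (rho : 'M[C]_n) b f :
  Jbeta b rho f = tr_gram f (fun j => beta_mul rho b (f j)).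
Proof. by apply/matrixP => i j; rewrite !mxE ip_betaE. Qed.

Lemma adjmx_rho_gram (rho : 'M[C]_n) f g :
  adjmx rho = rho -> adjmx (rho_gram rho f g) = rho_gram rho g f.
Proof.
move=> rho_herm; apply/matrixP => i j; rewrite !mxE -mxtrace_adj !adjmxM adjmxK rho_herm.
by rewrite mulmxA.
Qed.

End Gram.

Section PositiveGram.
Variable R : rcfType.
Local Notation C := R[i].
Variables (n d m : nat) (rho : 'M[C]_n).
Hypothesis rho_pos : forall v : 'cV[C]_n, v != 0 -> 0 < (adjmx v *m rho *m v) 0 0.
Implicit Types (f : 'I_d -> 'M[C]_n) (g : 'I_m -> 'M[C]_n).

Lemma Jbeta_unit b f : 0 <= b <= 1 -> C_lin_indep f -> Jbeta b rho f \in unitmx.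
Proof.
move=> b01 f_indep; apply: unitmx_of_ker => x Jx0.
apply: lin_indep_fam_mulmx_eq0 f_indep _; apply: (trace_beta_mul_eq0 rho_pos b01).
have := congr1 (mulmx (adjmx x)) Jx0.
rewrite mulmx0 Jbeta_tr_gram -tr_gram_mulmxr -tr_gram_mulmxl => /matrixP/(_ 0 0).
by rewrite !mxE (linear_fam_mulmx (beta_mul rho b)).
Qed.

(* Writing G_xy for [rho_gram rho x y] and c := G_gg^-1 G_gf, the Gram matrix of
   f - g c is G_ff - G_fg c = 0. *)
Lemma rho_gram_projection f g : rho_gram rho g g \in unitmx ->
    rho_gram rho f f = rho_gram rho f g *m invmx (rho_gram rho g g) *m rho_gram rho g f ->
  forall k, f k = fam_mulmx g (invmx (rho_gram rho g g) *m rho_gram rho g f) k.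
Proof.
set c := invmx _ *m _ => Ggg_unit Gff k.
have Ggg_c : rho_gram rho g g *m c = rho_gram rho g f by rewrite mulKVmx.
have Gfg_c : rho_gram rho f g *m c = rho_gram rho f f by rewrite Gff mulmxA.
have : rho_gram rho (fun i => f i - fam_mulmx g c i) (fun i => f i - fam_mulmx g c i) = 0.
  have -> : rho_gram rho (fun i => f i - fam_mulmx g c i) (fun i => f i - fam_mulmx g c i) =
      tr_gram (fun i => f i - fam_mulmx g c i)
              (fun j => rho *m f j - fam_mulmx (fun i => rho *m g i) c j).
    by apply: eq_tr_gram => // j; rewrite mulmxBr (linear_fam_mulmx (mulmx rho)).
  rewrite tr_gramBl !tr_gramBr !tr_gram_mulmxl !tr_gram_mulmxr.
  by rewrite [_ *m c]Gfg_c [_ *m c]Ggg_c !subrr.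
move=> /matrixP/(_ k k); rewrite !mxE mulmxA => /(trace_form_eq0 rho_pos) /eqP.
by rewrite subr_eq0 => /eqP.
Qed.

End PositiveGram.

Section Invariance.
Variable R : rcfType.
Local Notation C := R[i].
Variables (n d : nat) (rho : 'M[C]_n).
Hypothesis rho_pos : forall v : 'cV[C]_n, v != 0 -> 0 < (adjmx v *m rho *m v) 0 0.
Variable f : 'I_d -> 'M[C]_n.

Lemma D_invariant_Rspan :
  D_invariant rho (Rspan f) <-> forall k, Rspan f (comm_op rho (f k)).
Proof.
split=> [/(D_invariantE rho_pos) f_inv k | stable]; first exact/f_inv/Rspan_mem.
by apply/(D_invariantE rho_pos); apply: Rspan_stable.
Qed.

Lemma D_invariant_Cspan :
  D_invariant rho (Cspan f) <-> forall k, Cspan f (comm_op rho (f k)).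
Proof.
split=> [/(D_invariantE rho_pos) f_inv k | stable]; first exact/f_inv/Cspan_mem.
by apply/(D_invariantE rho_pos); apply: Cspan_stable.
Qed.

End Invariance.

Section ReImMatrices.
Variable R : rcfType.
Local Notation C := R[i].
Variables (d : nat) (Z : 'M[C]_d).

Lemma ReIm_mx_rect : Re_mx Z + (cR 1 * iC) *: Im_mx Z = Z.
Proof. by apply/matrixP => i j; rewrite !mxE /cR rmorph1 mul1r -Crect. Qed.

Hypothesis Z_herm : adjmx Z = Z.

Lemma adjmx_ReIm_mx (b : R) :
  adjmx (Re_mx Z + (cR b * iC) *: Im_mx Z) = Re_mx Z + (cR b * iC) *: Im_mx Z.
Proof.
apply/matrixP => i j; have /matrixP/(_ j i) := Z_herm; rewrite !mxE => <-.
rewrite Re_conj Im_conj rmorphD !rmorphM /= cR_conj conj_iC.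
by rewrite rmorphN /= !(conj_Creal (Creal_Re _), conj_Creal (Creal_Im _)) !(mulrN, mulNr) opprK.
Qed.

Lemma adjmx_Re_mx : adjmx (Re_mx Z) = Re_mx Z.
Proof. by have := adjmx_ReIm_mx 0; rewrite /cR rmorph0 mul0r scale0r addr0. Qed.

End ReImMatrices.

Section ZMatrix.
Variable R : rcfType.
Local Notation C := R[i].
Variables (n d : nat) (rho : 'M[C]_n) (f : 'I_d -> 'M[C]_n).
Hypotheses (rho_herm : adjmx rho = rho) (f_herm : forall k, adjmx (f k) = f k).

Lemma Zmat_rho_gram : Zmat rho f = rho_gram rho f f.
Proof. by apply/matrixP => i j; rewrite !mxE f_herm mulmxA. Qed.

Lemma adjmx_Zmat : adjmx (Zmat rho f) = Zmat rho f.
Proof. by rewrite Zmat_rho_gram adjmx_rho_gram. Qed.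

Lemma Zmat_conj i j : (Zmat rho f i j)^* = \tr (f i *m f j *m rho).
Proof.
have /matrixP/(_ j i) := adjmx_Zmat; rewrite !mxE => ->.
by rewrite mxtrace_mulC mulmxA.
Qed.

End ZMatrix.

Section SLDSpan.
Variable R : rcfType.
Local Notation C := R[i].
Variables (n d : nat) (rho : 'M[C]_n) (drho : 'I_d -> 'M[C]_n) (L : R -> 'I_d -> 'M[C]_n).
Hypothesis rho_herm : adjmx rho = rho.
Hypothesis rho_pos : forall v : 'cV[C]_n, v != 0 -> 0 < (adjmx v *m rho *m v) 0 0.
Hypothesis drho_herm : forall k, herm_op (drho k).
Hypothesis L_beta :
  forall b, 0 <= b <= 1 -> forall k, beta_LD_eq b rho (drho k) (L b k).
Hypothesis L0_indep : R_lin_indep (L 0).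

Local Notation L0 := (L 0).
Local Notation D := (comm_op rho).
Local Notation J := (Jbeta 0 rho L0).
Local Notation Z := (Zmat rho L0).

Let beta0 : 0 <= (0 : R) <= 1. Proof. by rewrite lexx ler01. Qed.
Let beta1 : 0 <= (1 : R) <= 1. Proof. by rewrite lexx ler01. Qed.

Lemma drhoE b k : 0 <= b <= 1 -> drho k = beta_mul rho b (L b k).
Proof. by move=> b01; apply: L_beta. Qed.

Lemma drho_L0 k : drho k = beta_mul rho 0 (L0 k).
Proof. exact: drhoE. Qed.

Lemma L0_herm k : adjmx (L0 k) = L0 k.
Proof.
apply: (beta_mul0_inj rho_pos).
by rewrite -adjmx_beta_mul0 // -drho_L0 drho_herm.
Qed.

Lemma L_beta_C_indep b : 0 <= b <= 1 -> C_lin_indep (L b).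
Proof.
move=> b01 c cL0; apply: C_lin_indep_herm L0_herm L0_indep _ _.
apply: (beta_mul0_inj rho_pos); rewrite linear0 linear_sum.
transitivity (beta_mul rho b (\sum_i c i *: L b i)); last by rewrite cL0 linear0.
rewrite linear_sum; apply: eq_bigr => i _.
by rewrite !linearZ /= -(drhoE _ beta0) -(drhoE _ b01).
Qed.

Lemma D_invariant_drho_L0 : D_invariant rho (Rspan drho) <-> D_invariant rho (Rspan L0).
Proof.
have drho_stable k : Rspan drho (D (drho k)) <-> Rspan L0 (D (L0 k)).
  rewrite drho_L0 comm_op_beta_mul //.
  exact: Rspan_linear_inj (beta_mul0_inj rho_pos) drho_L0 _.
split=> /(D_invariant_Rspan rho_pos) stable; apply/(D_invariant_Rspan rho_pos) => k.
  exact: iffLR (drho_stable k) (stable k).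
exact: iffRL (drho_stable k) (stable k).
Qed.

Lemma D_invariant_Rspan_Cspan : D_invariant rho (Rspan L0) <-> D_invariant rho (Cspan L0).
Proof.
split=> [/(D_invariant_Rspan rho_pos) | /(D_invariant_Cspan rho_pos)] stable.
  by apply/(D_invariant_Cspan rho_pos) => k; apply/Rspan_Cspan.
apply/(D_invariant_Rspan rho_pos) => k.
apply: (Cspan_herm_Rspan L0_herm) (stable k).
exact (etrans (adjmx_comm_op rho_pos rho_herm _) (congr1 D (L0_herm k))).
Qed.

Lemma D_invariant_Cspan_coefs :
  D_invariant rho (Cspan L0) -> exists A, forall k, D (L0 k) = fam_mulmx L0 A k.
Proof.
move/(D_invariant_Cspan rho_pos) => /fin_all_exists [c DL0].
by exists (\matrix_(j, k) c k j) => k; rewrite DL0; apply: eq_bigr => j _; rewrite mxE.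
Qed.

Lemma J_Re_mx : J = Re_mx Z.
Proof.
rewrite Jbeta_tr_gram; apply/matrixP => i j.
rewrite [RHS]mxE ReE (Zmat_conj rho_herm L0_herm) !mxE beta_mul0E -scalemxAr linearZ.
by rewrite mulmxDr linearD /= L0_herm !mulmxA mulrC addrC.
Qed.

Lemma J_unit : J \in unitmx.
Proof. exact (Jbeta_unit rho_pos beta0 (L_beta_C_indep beta0)). Qed.

Lemma adjmx_J : adjmx J = J.
Proof. by rewrite J_Re_mx adjmx_Re_mx // (adjmx_Zmat rho_herm L0_herm). Qed.

Section Coefficients.
Variable A : 'M[C]_d.
Hypothesis DL0 : forall k, D (L0 k) = fam_mulmx L0 A k.

Definition Mbeta (b : R) : 'M[C]_d := 1%:M + (iC * cR b) *: A.

Lemma beta_mul_fam_mulmx b m (M : 'M[C]_(d, m)) k :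
  beta_mul rho b (fam_mulmx L0 M k) = beta_mul rho 0 (fam_mulmx L0 (Mbeta b *m M) k).
Proof.
have comb : fam_mulmx L0 M k + (iC * cR b) *: D (fam_mulmx L0 M k) =
    fam_mulmx L0 (Mbeta b *m M) k.
  rewrite (linear_fam_mulmx D) (eq_fam_mulmx _ _ DL0) fam_mulmxA.
  by rewrite mulmxDl mul1mx -scalemxAl fam_mulmxD fam_mulmxZ.
exact (etrans (beta_mul_comm_op rho_pos b _) (congr1 (beta_mul rho 0) comb)).
Qed.

Lemma Mbeta_unit b : 0 <= b <= 1 -> Mbeta b \in unitmx.
Proof.
move=> b01; apply: unitmx_of_ker => x Mx0.
apply: lin_indep_fam_mulmx_eq0 (C_lin_indep_herm L0_herm L0_indep) _.
apply: (beta_mul_inj rho_pos b01).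
by rewrite beta_mul_fam_mulmx Mx0 fam_mulmx0 !linear0.
Qed.

Lemma L_beta_fam_mulmx b k : 0 <= b <= 1 -> L b k = fam_mulmx L0 (invmx (Mbeta b)) k.
Proof.
move=> b01; apply: (beta_mul_inj rho_pos b01).
by rewrite -drhoE // beta_mul_fam_mulmx mulmxV ?Mbeta_unit // fam_mulmx1 drho_L0.
Qed.

Lemma Cspan_L_beta b : 0 <= b <= 1 -> forall X, Cspan L0 X <-> Cspan (L b) X.
Proof.
move=> b01; have LE k : L b k = fam_mulmx L0 (invmx (Mbeta b)) k by apply: L_beta_fam_mulmx.
by apply: (Cspan_fam_mulmx_unit _ LE); rewrite unitmx_inv Mbeta_unit.
Qed.

Lemma Jbeta_L_beta b : 0 <= b <= 1 -> Jbeta b rho (L b) = adjmx (invmx (Mbeta b)) *m J.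
Proof.
move=> b01; rewrite !Jbeta_tr_gram -tr_gram_mulmxl.
by apply: eq_tr_gram => k; [exact: L_beta_fam_mulmx | rewrite -(drhoE _ b01) -drho_L0].
Qed.

Lemma JA_Im_mx : J *m A = Im_mx Z.
Proof.
rewrite Jbeta_tr_gram -tr_gram_mulmxr; apply/matrixP => i j.
rewrite [RHS]mxE ImE (Zmat_conj rho_herm L0_herm) !mxE.
rewrite -(linear_fam_mulmx (beta_mul rho 0)) /= -DL0 beta_mul0_comm_op //.
rewrite -scalemxAr linearZ mulmxBr linearB /= L0_herm !mulmxA /iC.
ring.
Qed.

Lemma J_Mbeta b : J *m Mbeta b = Re_mx Z + (cR b * iC) *: Im_mx Z.
Proof. by rewrite mulmxDr mulmx1 -scalemxAr JA_Im_mx J_Re_mx mulrC. Qed.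

Lemma invmx_Jbeta b : 0 <= b <= 1 ->
  invmx (Jbeta b rho (L b)) = invmx J *m (Re_mx Z + (cR b * iC) *: Im_mx Z) *m invmx J.
Proof.
move=> b01; rewrite Jbeta_L_beta // -J_Mbeta.
apply: invmx_adjmx_inv_mul; [exact: J_unit | exact: Mbeta_unit |].
by rewrite -[in RHS]adjmx_J -adjmxM J_Mbeta adjmx_ReIm_mx // (adjmx_Zmat rho_herm L0_herm).
Qed.

End Coefficients.

Lemma comm_op_L1 k : D (L 1 k) = - iC *: (L0 k - L 1 k).
Proof.
have := drhoE k beta1; rewrite drho_L0 (beta_mul_comm_op rho_pos 1).
move=> /(beta_mul0_inj rho_pos) ->.
by rewrite addrAC subrr add0r scalerA /cR rmorph1 mulr1 mulNr -expr2 sqrCi opprK scale1r.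
Qed.

Lemma D_invariant_of_Cspan_L1 :
  (forall X, Cspan L0 X <-> Cspan (L 1) X) -> D_invariant rho (Cspan L0).
Proof.
move=> spanE; have L1_inv : D_invariant rho (Cspan (L 1)).
  apply/(D_invariant_Cspan rho_pos) => k; rewrite comm_op_L1.
  by apply/CspanZ/CspanB; [apply/spanE | ]; apply: Cspan_mem.
by move=> X Y /spanE L1X relXY; apply/spanE; apply: L1_inv L1X relXY.
Qed.

Lemma Cspan_L1_of_invmx_Jbeta1 :
  invmx (Jbeta 1 rho (L 1)) = invmx J *m (Re_mx Z + (cR 1 * iC) *: Im_mx Z) *m invmx J ->
  forall X, Cspan L0 X <-> Cspan (L 1) X.
Proof.
rewrite ReIm_mx_rect; set N := Jbeta 1 rho (L 1) => invN.
have N_unit : N \in unitmx := Jbeta_unit rho_pos beta1 (L_beta_C_indep beta1).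
have NE : N = rho_gram rho (L 1) (L 1).
  by rewrite /N Jbeta_tr_gram; apply: eq_tr_gram => // k; rewrite beta_mul1E.
have JE : J = rho_gram rho L0 (L 1).
  rewrite Jbeta_tr_gram; apply: eq_tr_gram => // k.
  by rewrite -beta_mul1E -(drhoE _ beta1) -drho_L0.
have J'E : J = rho_gram rho (L 1) L0 by rewrite -adjmx_rho_gram // -JE adjmx_J.
have ZE : Z = rho_gram rho L0 L0 by apply: Zmat_rho_gram => //; apply: L0_herm.
have Z_gram : Z = J *m invmx N *m J.
  by rewrite invN !mulmxA mulmxV ?J_unit // mul1mx mulmxKV ?J_unit.
have := rho_gram_projection rho_pos (f := L0) (g := L 1); rewrite -NE -JE -J'E -ZE.
move=> /(_ N_unit Z_gram) L0E.
have c_unit : invmx N *m J \in unitmx.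
  by rewrite unitmx_mul unitmx_inv; apply/andP; split; [exact N_unit | exact J_unit].
exact (fun X => iff_sym (Cspan_fam_mulmx_unit c_unit L0E X)).
Qed.

Lemma sld_span_invariance_tfae :
  [<-> D_invariant rho (Rspan drho);
       D_invariant rho (Rspan L0);
       D_invariant rho (Cspan L0);
       forall b, 0 <= b <= 1 -> forall X, Cspan L0 X <-> Cspan (L b) X;
       forall b, 0 <= b <= 1 ->
         invmx (Jbeta b rho (L b)) = invmx J *m (Re_mx Z + (cR b * iC) *: Im_mx Z) *m invmx J].
Proof.
tfae=> [/D_invariant_drho_L0 // | /D_invariant_Rspan_Cspan // | inv | spanE | invJ].
- by have [A DL0] := D_invariant_Cspan_coefs inv; apply: Cspan_L_beta.
- have [A DL0] := D_invariant_Cspan_coefs (D_invariant_of_Cspan_L1 (spanE 1 beta1)).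
  by move=> b b01; apply: invmx_Jbeta.
- apply/D_invariant_drho_L0/D_invariant_Rspan_Cspan/D_invariant_of_Cspan_L1.
  exact/Cspan_L1_of_invmx_Jbeta1/invJ.
Qed.

End SLDSpan.

Theorem lemma11 (R : realType) (n d : nat) (rho : 'M[R[i]]_n)
  (drho : 'I_d -> 'M[R[i]]_n) (L : R -> 'I_d -> 'M[R[i]]_n) :
  density rho -> strictly_positive rho ->
  (forall k, herm_op (drho k)) -> (forall k, \tr (drho k) = 0) ->
  (forall beta : R, 0 <= beta <= 1 -> forall k, beta_LD_eq beta rho (drho k) (L beta k)) ->
  R_lin_indep (L 0) ->
  [<-> D_invariant rho (Rspan drho);
       D_invariant rho (Rspan (L 0));
       D_invariant rho (Cspan (L 0));
       forall beta : R, 0 <= beta <= 1 ->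
         forall X, Cspan (L 0) X <-> Cspan (L beta) X;
       forall beta : R, 0 <= beta <= 1 ->
         invmx (Jbeta beta rho (L beta)) =
         invmx (Jbeta 0 rho (L 0)) *m
           (Re_mx (Zmat rho (L 0)) + (cR beta * iC) *: (Im_mx (Zmat rho (L 0)))) *m
           invmx (Jbeta 0 rho (L 0))].
Proof.
move=> _ [rho_herm rho_pos] drho_herm _ L_beta L0_indep.
exact (sld_span_invariance_tfae rho_herm rho_pos drho_herm L_beta L0_indep).
Qed.
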